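(* Under the setting of the cluster-growth decomposition (with $v_m$ following the canonical grain extension relative to $\mathbf a$, and $F=F_*\sqcup F_\circ\subset E_d(\square_m)$): (1) if $F_\circ\neq\emptyset$, then $(D_Fv_m)(x)=0$ for all $x\in\mathscr C_{bc}^{\mathbf a^F}(\square_m)$; (2) for $x\in\square_m\setminus\mathscr C_{bc}^{\mathbf a^F}(\square_m)$, if $F_\circ$ is not contained in the set of edges having both endpoints in $\mathcal O^{\mathbf a^{F_\circ}}(x)$, then $(D_Fv_m)(x)=0$.
   Context: Bond configurations on $\mathbb Z^d$, $\ell^\infty$ distance $\mathrm{dist}$, $\square_m=\mathbb Z^d\cap(-3^m/2,3^m/2)^d$, $E_d(\square_m)$ its edges, $\partial\square_m=\{x\in\square_m:\exists y\sim x,y\notin\square_m\}$. For a configuration $\mathbf b$: $\mathscr C_{bc}^{\mathbf b}(\square_m)$ is the set of $x\in\square_m$ joined to $\partial\square_m$ by a $\mathbf b$-open path inside $\square_m$; $\mathcal O^{\mathbf b}(x)$ the set of vertices joined to $x$ by a $\mathbf b$-open path inside $\square_m$. $\mathbf a^G(e)=\mathbf 1_{e\in G}+\mathbf a(e)\mathbf 1_{e\notin G}$. Canonical grain relative to $\mathbf a$: $[x]^G=x$ if $x\in\mathscr C_{bc}^{\mathbf a^G}(\square_m)$, else $[x]^G=\arg\min_{y\in\mathscr C_{bc}^{\mathbf a}(\square_m)}\mathrm{dist}(y,\mathcal O^{\mathbf a^G}(x))$ (lexicographic tie-break). Fix $\xi$; $h^{\mathbf b}$ is the unique function on $\mathscr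 C_{bc}^{\mathbf b}(\square_m)$ equal to $\xi\cdot x$ on $\partial\square_m$ and $\mathbf b$-harmonic at its other points; $v_m^G(x):=h^{\mathbf a^G}([x]^G)$ and $(D_Fv_m)(x)=\sum_{G\subset F}(-1)^{|F\setminus G|}v_m^G(x)$. $F_*=\{e\in F:$ both endpoints of $e$ in $\mathscr C_{bc}^{\mathbf a^F}(\square_m)\}$, $F_\circ=F\setminus F_*$. *)

From HB Require Import structures.
From mathcomp Require Import all_boot all_order all_algebra.
From mathcomp Require Import boolp reals.
From Stdlib Require Import ClassicalEpsilon.
Set Implicit Arguments. Unset Strict Implicit. Unset Printing Implicit Defensive.
Import Order.TTheory GRing.Theory Num.Theory.
Local Open Scope ring_scope.

Section Grain.
Variables (d m : nat).

Definition side : nat := (3 ^ m)%N.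

(* vertices of square_m, indexed by coordinates in {0,..,3^m-1};
   the actual point of Z^d is [emb x] (shift by (3^m-1)/2) *)
Definition V := {ffun 'I_d -> 'I_side}.

Definition emb (x : V) : 'I_d -> int :=
  fun i => (x i : nat)%:Z - ((side.-1)./2)%:Z.

Definition adjZ (z w : 'I_d -> int) : bool := (\sum_(i < d) `|z i - w i|) == 1.

Definition inboxZ (z : 'I_d -> int) : bool :=
  [forall i, (- (side%:Z) < 2 * z i) && (2 * z i < side%:Z)].

Definition bdry : {set V} :=
  [set x | `[< exists z : 'I_d -> int, adjZ (emb x) z && ~~ inboxZ z >]].

Definition adj (x y : V) : bool := adjZ (emb x) (emb y).

Definition Ed : {set {set V}} :=
  [set e : {set V} | [exists x : V, exists y : V, adj x y && (e == [set x; y])]].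

(* bond configurations (only values on edges of the box matter) *)
Definition config := {set V} -> bool.

Definition aG (a : config) (G : {set {set V}}) : config :=
  fun e => (e \in G) || a e.

Definition ropen (b : config) : rel V := fun x y => adj x y && b [set x; y].

Definition Oc (b : config) (x : V) : {set V} := [set y | connect (ropen b) x y].

Definition Cbc (b : config) : {set V} :=
  [set x | [exists y, (y \in bdry) && connect (ropen b) x y]].

Definition distinf (x y : V) : nat := \max_(i < d) absz (emb x i - emb y i).

(* distance from a point to a (nonempty) set; the default [side] exceeds every
   distance in the box and only matters for the empty set *)
Definition distset (y : V) (S : {set V}) : nat := \big[minn/side]_(z in S) distinf y z.

Definition lexlt (y z : V) : Prop :=
  exists i : 'I_d, (forall j : 'I_d, (j < i)%N -> emb y j = emb z j) /\ emb y i < emb z i.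

Definition is_grain (a : config) (G : {set {set V}}) (x y : V) : Prop :=
  if x \in Cbc (aG a G) then y = x else
  [/\ y \in Cbc a,
      forall y', y' \in Cbc a ->
        (distset y (Oc (aG a G) x) <= distset y' (Oc (aG a G) x))%N
    & forall y', y' \in Cbc a ->
        distset y' (Oc (aG a G) x) = distset y (Oc (aG a G) x) -> y' <> y -> lexlt y y'].

Definition grain (a : config) (G : {set {set V}}) (x : V) : V :=
  epsilon (inhabits x) (is_grain a G x).

Variable R : realType.
Variable xi : 'I_d -> R.

Definition dotxi (x : V) : R := \sum_(i < d) xi i * (emb x i)%:~R.

Definition is_harm (b : config) (h : V -> R) : Prop :=
  (forall x, x \in bdry -> h x = dotxi x) /\
  (forall x, x \in Cbc b -> x \notin bdry -> \sum_(y | ropen b x y) (h y - h x) = 0).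

Definition harm (b : config) : V -> R :=
  epsilon (inhabits (fun _ => 0)) (is_harm b).

Definition vm (a : config) (G : {set {set V}}) (x : V) : R :=
  harm (aG a G) (grain a G x).

Definition DF (a : config) (F : {set {set V}}) (x : V) : R :=
  \sum_(G in powerset F) (-1) ^+ #|F :\: G| * vm a G x.

Definition Fstar (a : config) (F : {set {set V}}) : {set {set V}} :=
  [set e in F | e \subset Cbc (aG a F)].

Definition Fcirc (a : config) (F : {set {set V}}) : {set {set V}} :=
  F :\: Fstar a F.

End Grain.

From HB Require Import structures.
From mathcomp Require Import all_boot all_order all_algebra.
From mathcomp Require Import boolp reals.
Set Implicit Arguments. Unset Strict Implicit. Unset Printing Implicit Defensive.
Import Order.TTheory GRing.Theory Num.Theory.
Local Open Scope ring_scope.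

(* Let e be a bond of F whose endpoints do not both lie in C_bc^{a^F}.  Opening
   e on top of a^G (G a subset of F) leaves C_bc and the open bonds inside it
   unchanged, hence also h; if moreover e is not inside O^{a^F}(x), the cluster
   of x is unchanged too.  Then G |-> v_m^G(x) does not see e, and the
   alternating sum D_F v_m(x) cancels in pairs G, e |: G.  A point outside
   C_bc^{a^F} never reaches a bond of F_*, so its a^F-cluster is already its
   a^{F_circ}-cluster. *)

Lemma sum_powerset_setD1 (T : finType) (R : zmodType) (F : {set T}) (e : T)
    (c : {set T} -> R) :
  e \in F ->
  \sum_(G in powerset F) c G = \sum_(G in powerset (F :\ e)) (c G + c (e |: G)).
Proof.
move=> eF; rewrite (bigID (fun G : {set T} => e \in G)) big_split /= addrC.
congr (_ + _); first by apply: eq_bigl => G; rewrite !powersetE subsetD1 andbC.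
rewrite (reindex_onto (fun G => e |: G) (fun G => G :\ e)) => [|G /andP[_ eG]];
  last exact: setD1K.
apply: eq_bigl => G; rewrite !powersetE subsetD1 setU11 andbT subUset sub1set eF /=.
by congr (_ && _); apply/eqP/idP => [<-|/setU1K//]; rewrite !inE eqxx.
Qed.

Lemma alternating_sum_powerset_eq0 (T : finType) (R : pzRingType) (F : {set T})
    (e : T) (f : {set T} -> R) :
  e \in F -> (forall G : {set T}, G \subset F :\ e -> f (e |: G) = f G) ->
  \sum_(G in powerset F) (-1) ^+ #|F :\: G| * f G = 0.
Proof.
move=> eF fe; rewrite (sum_powerset_setD1 _ eF) big1 // => G.
rewrite powersetE => GFe.
have eG : e \notin G.
  by apply: contraTN GFe => eG; apply/subsetPn; exists e; rewrite ?setD11.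
have -> : #|F :\: G| = #|F :\: (e |: G)|.+1.
  by rewrite (cardsD1 e) !inE eF eG setDDl setUC.
by rewrite fe // exprS mulN1r mulNr addNr.
Qed.

Lemma connect_sub_reachable (T : finType) (r r' : rel T) (x y : T) :
  (forall z w, connect r' x z -> r' z w -> r z w) ->
  connect r' x y -> connect r x y.
Proof.
move=> rr' /connectP[p pth ->].
elim: p x pth rr' => [|z p IHp] x /=; first by rewrite connect0.
case/andP=> rxz pth rr'.
apply: connect_trans (connect1 (rr' x z (connect0 _ _) rxz)) _.
apply: IHp => // u w zu; apply: rr'; exact: connect_trans (connect1 rxz) zu.
Qed.

Section Clusters.
Variables (d m : nat).
Implicit Types (a b : config d m) (x y z w : V d m) (e : {set V d m}).

Definition config_le b b' := forall s, b s -> b' s.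

Lemma aG_le a (G H : {set {set V d m}}) : G \subset H -> config_le (aG a G) (aG a H).
Proof. by move=> GH s; rewrite /aG => /orP[/(subsetP GH)->|->]; rewrite ?orbT. Qed.

Lemma adj_sym : symmetric (@adj d m).
Proof.
move=> x y; rewrite /adj /adjZ; congr (_ == _).
by apply: eq_bigr => i _; exact: distrC.
Qed.

Lemma ropen_sym b : symmetric (ropen b).
Proof. by move=> x y; rewrite /ropen adj_sym setUC. Qed.

Lemma connect_ropenC b x y : connect (ropen b) x y = connect (ropen b) y x.
Proof. exact: (sym_connect_sym (@ropen_sym b)). Qed.

Lemma Cbc_connect b x y : connect (ropen b) x y -> (x \in Cbc b) = (y \in Cbc b).
Proof.
move=> cxy; rewrite !inE; apply/existsP/existsP => -[z /andP[zB cz]]; exists z.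
  by rewrite zB (connect_trans _ cz) // connect_ropenC.
by rewrite zB (connect_trans cxy cz).
Qed.

Lemma Oc_sub_Cbc b x : x \in Cbc b -> Oc b x \subset Cbc b.
Proof. by move=> xC; apply/subsetP => y; rewrite inE => /Cbc_connect <-. Qed.

Lemma connect_ropen_mono b b' x y :
  config_le b b' -> connect (ropen b) x y -> connect (ropen b') x y.
Proof.
move=> bb'; apply: connect_sub_reachable => z w _ /andP[zw bzw].
by rewrite /ropen zw bb'.
Qed.

Lemma Cbc_mono b b' : config_le b b' -> Cbc b \subset Cbc b'.
Proof.
move=> bb'; apply/subsetP => x; rewrite !inE => /existsP[y /andP[yB cxy]].
by apply/existsP; exists y; rewrite yB (connect_ropen_mono bb').
Qed.

Lemma Oc_mono b b' x : config_le b b' -> Oc b x \subset Oc b' x.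
Proof. by move=> bb'; apply/subsetP => y; rewrite !inE; exact: connect_ropen_mono. Qed.

Lemma Cbc_closed_ropen b z w : z \in Cbc b -> ropen b z w -> w \in Cbc b.
Proof. by move=> zC /connect1 /Cbc_connect <-. Qed.

Lemma Oc_closed_ropen b x z w : z \in Oc b x -> ropen b z w -> w \in Oc b x.
Proof. by rewrite !inE => xz /connect1; exact: connect_trans. Qed.

Section AddEdge.
Context {b b' bF : config d m} {e : {set V d m}}.
Hypotheses (bb' : config_le b b') (b'bF : config_le b' bF)
  (b'_sub : forall s, s != e -> b' s -> b s).

Lemma ropen_add_edge_in (S : {set V d m}) z w :
  (forall u v, u \in S -> ropen bF u v -> v \in S) -> ~~ (e \subset S) ->
  z \in S -> ropen b' z w -> ropen b z w.
Proof.
move=> Sclosed eS zS /andP[zw b'zw]; rewrite /ropen zw b'_sub //.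
apply: contra eS => /eqP <-; rewrite subUset !sub1set zS.
by apply: Sclosed zS _; rewrite /ropen zw b'bF.
Qed.

Lemma Oc_add_edge x : ~~ (e \subset Oc bF x) -> Oc b' x = Oc b x.
Proof.
move=> eO; apply/eqP; rewrite eqEsubset (Oc_mono x bb') andbT.
apply/subsetP => y; rewrite !inE; apply: connect_sub_reachable => z w xz.
have zO : z \in Oc bF x by rewrite inE (connect_ropen_mono b'bF xz).
exact: (ropen_add_edge_in (@Oc_closed_ropen bF x) eO zO).
Qed.

Hypothesis eCbc : ~~ (e \subset Cbc bF).

Lemma Cbc_add_edge : Cbc b' = Cbc b.
Proof.
apply/eqP; rewrite eqEsubset (Cbc_mono bb') andbT; apply/subsetP => x xC.
have xCF : x \in Cbc bF by apply: subsetP (Cbc_mono b'bF) _ xC.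
move: xC; rewrite !inE => /existsP[y /andP[yB cxy]]; apply/existsP; exists y.
rewrite yB; apply: connect_sub_reachable cxy => z w xz.
apply: ropen_add_edge_in (@Cbc_closed_ropen bF) eCbc _.
by rewrite -(Cbc_connect (connect_ropen_mono b'bF xz)).
Qed.

Lemma ropen_add_edge_Cbc z w : z \in Cbc b -> ropen b' z w = ropen b z w.
Proof.
move=> zC; apply/idP/idP => [|/andP[zw bzw]]; last by rewrite /ropen zw bb'.
apply: ropen_add_edge_in (@Cbc_closed_ropen bF) eCbc _.
by apply: subsetP (Cbc_mono b'bF) _ _; rewrite Cbc_add_edge.
Qed.

Lemma harm_add_edge (R : realType) (xi : 'I_d -> R) : harm xi b' = harm xi b.
Proof.
rewrite /harm; suff -> : is_harm xi b' = is_harm xi b by [].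
apply: funext => h; apply: propext.
rewrite /is_harm Cbc_add_edge; split=> -[hB hH]; split=> // x xC xnB;
  by rewrite -[RHS](hH x xC xnB); apply: eq_bigl => y; rewrite ropen_add_edge_Cbc.
Qed.

End AddEdge.

Variables (R : realType) (xi : 'I_d -> R).

Lemma vm_setU1 a (F G : {set {set V d m}}) e x :
  e \in F -> G \subset F -> ~~ (e \subset Cbc (aG a F)) ->
  ~~ (e \subset Oc (aG a F) x) -> vm xi a (e |: G) x = vm xi a G x.
Proof.
move=> eF GF eC eO.
have eGF : e |: G \subset F by rewrite subUset sub1set eF.
have le1 := aG_le (a := a) (subsetUr [set e] G).
have le2 := aG_le (a := a) eGF.
have sub1 : forall s, s != e -> aG a (e |: G) s -> aG a G s.
  by move=> s se; rewrite /aG in_setU1 (negbTE se).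
rewrite /vm (harm_add_edge le1 le2 sub1 eC) /grain.
suff -> : is_grain a (e |: G) x = is_grain a G x by [].
apply: funext => y.
by rewrite /is_grain (Cbc_add_edge le1 le2 sub1 eC) (Oc_add_edge le1 le2 sub1 eO).
Qed.

Lemma DF_eq0 a (F : {set {set V d m}}) e x :
  e \in F -> ~~ (e \subset Cbc (aG a F)) -> ~~ (e \subset Oc (aG a F) x) ->
  DF xi a F x = 0.
Proof.
move=> eF eC eO; apply: (alternating_sum_powerset_eq0 eF) => G GFe.
by apply: vm_setU1 eF _ eC eO; apply: subset_trans GFe (subD1set _ _).
Qed.

Lemma in_Fcirc a (F : {set {set V d m}}) e :
  (e \in Fcirc a F) = (e \in F) && ~~ (e \subset Cbc (aG a F)).
Proof. by rewrite !inE andbC; case: (e \in F). Qed.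

Lemma Oc_aG_Fcirc a (F : {set {set V d m}}) x :
  x \notin Cbc (aG a F) -> Oc (aG a F) x \subset Oc (aG a (Fcirc a F)) x.
Proof.
move=> xnC; apply/subsetP => y; rewrite !inE; apply: connect_sub_reachable.
move=> z w xz /andP[zw /orP[sF|asw]]; rewrite /ropen zw /aG ?asw ?orbT //.
rewrite in_Fcirc sF; apply/orP; left; apply: contra xnC => /subsetP sC.
by rewrite (Cbc_connect xz) sC // !inE eqxx.
Qed.

End Clusters.

Theorem corollary6p3 (d m : nat) (R : realType) (xi : 'I_d -> R)
  (a : config d m) (F : {set {set V d m}}) :
  F \subset Ed d m ->
  (Fcirc a F != set0 ->
     forall x, x \in Cbc (aG a F) -> DF xi a F x = 0) /\
  (forall x, x \notin Cbc (aG a F) ->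
     ~~ (Fcirc a F \subset [set e in Ed d m | e \subset Oc (aG a (Fcirc a F)) x]) ->
     DF xi a F x = 0).
Proof.
move=> FEd; split.
  case/set0Pn=> e; rewrite in_Fcirc => /andP[eF eC] x xC.
  apply: (DF_eq0 xi eF eC); apply: contra eC => eO.
  exact: subset_trans eO (Oc_sub_Cbc xC).
move=> x xnC /subsetPn[e + eO]; rewrite in_Fcirc => /andP[eF eC].
apply: (DF_eq0 xi eF eC); apply: contra eO => eO.
by rewrite inE (subsetP FEd) //= (subset_trans eO (Oc_aG_Fcirc xnC)).
Qed.
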